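(* Let $G$ be a graph and $v\in V(G)$. Let $G^-$ be obtained from $G$ by adding a vertex $v^-$ with $N_{G^-}(v^-)=N_G(v)$, and $G^+$ be obtained by adding a vertex $v^+$ with $N_{G^+}(v^+)=N_G[v]$ (closed neighborhood). Let $\star\in\{+,-\}$, and if $\star=+$ assume $v$ is not an isolated vertex. Then $\mathcal{Z}^{\mathrm{TE}}_{\star}(G^{\star})\cong(\mathcal{Z}^{\mathrm{TE}}_{\star}(G)\,\square\,P_2)/\!\sim$, $\mathcal{Z}^{\mathrm{TS}}_+(G^+)\cong(\mathcal{Z}^{\mathrm{TS}}_+(G)\,\square\,P_2)/\!\sim$, and $\mathcal{Z}^{\mathrm{TS}}_-(G^-)\cong(2\mathcal{Z}^{\mathrm{TS}}_-(G))/\!\sim$, where $V(P_2)=\{v,v^\star\}$, the vertices of the two copies in $2\mathcal{Z}^{\mathrm{TS}}_-(G)$ are written $(B,v)$ and $(B,v^-)$ for $B$ a vertex of $\mathcal{Z}^{\mathrm{TS}}_-(G)$, and in each case $\sim$ is the equivalence relation identifying $(B,v)$ with $(B,v^{\star})$ if and only if $v\in B$.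
   Context: $\square$ denotes the Cartesian product and $2H$ the disjoint union of two copies of $H$. For an equivalence relation $\sim$ on $V(H)$, the quotient graph $H/\!\sim$ has the equivalence classes as vertices, with two distinct classes adjacent iff some member of one is adjacent in $H$ to some member of the other. PSD forcing ($\star=+$): if $B$ is the current blue set, $C$ a component of $G-B$, and $u$ a blue vertex with $N_G(u)\cap V(C)=\{w\}$, then $u$ may force $w$ blue. Skew forcing ($\star=-$): any vertex $u$ (blue or white) with exactly one white neighbor $w$ may force $w$ blue. A $\mathrm{Z}_\star$-forcing set is a (possibly empty) set of initially blue vertices from which repeated forcing turns all vertices blue; $\mathrm{Z}_\star(G)$ is the minimum size. $\mathcal{Z}^{\mathrm{TE}}_\star(G)$ has as vertices the minimum $\mathrm{Z}_\star$-forcing sets of $G$, with $S_1S_2$ an edge iff $S_1\setminus S_2=\{v_1\}$ and $S_2\setminus S_1=\{v_2\}$ for some vertices $v_1,v_2$; $\mathcal{Z}^{\mathrm{TS}}_\star(G)$ has the same vertices with the additional requirement $v_1v_2\in E(G)$. *)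

From mathcomp Require Import all_boot.
Set Implicit Arguments. Unset Strict Implicit. Unset Printing Implicit Defensive.

Inductive sign := Plus | Minus.

Section Forcing.
Variables (T : finType) (e : rel T).

(** vertices of the component of G - B containing w (empty if w is blue) *)
Definition white_comp (B : {set T}) (w : T) : {set T} :=
  [set y | (y \notin B) &&
     connect [rel a b | [&& e a b, a \notin B & b \notin B]] w y].

Definition can_force (s : sign) (B : {set T}) (u w : T) : bool :=
  match s with
  | Plus => [&& u \in B, w \notin B &
             [set y in white_comp B w | e u y] == [set w]]
  | Minus => [set y | e u y && (y \notin B)] == [set w]
  end.

Inductive forcing_closes (s : sign) : {set T} -> Prop :=
| fc_done B : B = setT -> forcing_closes s B
| fc_step B u w : can_force s B u w -> forcing_closes s (w |: B) ->
    forcing_closes s B.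

Definition forcing_set (s : sign) (S : {set T}) : Prop := forcing_closes s S.

Definition min_forcing_set (s : sign) (S : {set T}) : Prop :=
  forcing_set s S /\ forall S', forcing_set s S' -> #|S| <= #|S'|.

End Forcing.

(** G^-  (s = Minus): new vertex None with N(None) = N_G(v);
    G^+  (s = Plus) : new vertex None with N(None) = N_G[v]. *)
Definition ext_graph (T : finType) (e : rel T) (s : sign) (v : T)
  : rel (option T) :=
  fun x y =>
    match x, y with
    | Some a, Some b => e a b
    | None, Some b => e v b || (if s is Plus then b == v else false)
    | Some a, None => e v a || (if s is Plus then a == v else false)
    | None, None => false
    end.

Record graph := Graph { gV : Type; gadj : gV -> gV -> Prop }.
Arguments gadj : clear implicits.
Arguments Graph : clear implicits.

Definition graph_iso (G H : graph) : Prop :=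
  exists f : gV G -> gV H, bijective f /\
    forall x y, gadj G x y <-> gadj H (f x) (f y).

Definition cart (G H : graph) : graph :=
  @Graph (gV G * gV H)
    (fun p q => (gadj G p.1 q.1 /\ p.2 = q.2) \/ (p.1 = q.1 /\ gadj H p.2 q.2)).

(** P_2 on vertex set bool: false stands for v, true for v^star *)
Definition P2 : graph := @Graph bool (fun a b => a <> b).

(** disjoint union of two copies: (x,false) = (x,v), (x,true) = (x,v^-) *)
Definition two_copies (G : graph) : graph :=
  @Graph (gV G * bool) (fun p q => p.2 = q.2 /\ gadj G p.1 q.1).

Definition quotient_graph (G : graph) (R : gV G -> gV G -> Prop) : graph :=
  @Graph {P : gV G -> Prop | exists x, P = R x}
    (fun P Q => proj1_sig P <> proj1_sig Q /\
       exists x y, proj1_sig P x /\ proj1_sig Q y /\ gadj G x y).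

Definition ident_rel (T : finType) (P : {set T} -> Prop) (v : T)
  (p q : {S : {set T} | P S} * bool) : Prop :=
  p.1 = q.1 /\ (p.2 = q.2 \/ v \in proj1_sig p.1).

Definition ZTE (T : finType) (s : sign) (e : rel T) : graph :=
  @Graph {S : {set T} | min_forcing_set e s S}
    (fun S1 S2 => exists v1 v2,
       proj1_sig S1 :\: proj1_sig S2 = [set v1] /\
       proj1_sig S2 :\: proj1_sig S1 = [set v2]).

Definition ZTS (T : finType) (s : sign) (e : rel T) : graph :=
  @Graph {S : {set T} | min_forcing_set e s S}
    (fun S1 S2 => exists v1 v2,
       [/\ proj1_sig S1 :\: proj1_sig S2 = [set v1],
           proj1_sig S2 :\: proj1_sig S1 = [set v2] & e v1 v2]).

From mathcomp Require Import all_boot.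
From Stdlib Require Import ProofIrrelevance FunctionalExtensionality PropExtensionality ClassicalEpsilon.
Set Implicit Arguments. Unset Strict Implicit. Unset Printing Implicit Defensive.

(* The new vertex v* (encoded as [None]) is a twin of v, so swapping v and v* is
   an automorphism of G*.  Two white twins cannot be forced one at a time, so every
   forcing set of G* contains v or v*; and deleting v* from a forcing set containing
   it leaves a forcing set of G, because a force by v* is replayed by v or, when v is
   still white under PSD forcing, by a neighbour of v (this is where v must not be
   isolated).  Hence the minimum forcing sets of G* are the sets B + v* and their
   images under the swap, for B minimum in G.  This parametrisation by (B, copy) is
   injective up to identifying the two copies when v is in B, and a token move between
   two such sets is either a move of G inside one copy, or the move between v and v*
   with B fixed, which is a slide exactly when v v* is an edge, i.e. in G+. *)

Lemma proj1_sig_inj (X : Type) (P : X -> Prop) : injective (@proj1_sig X P).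
Proof. by apply: eq_sig_hprop => x p q; apply: proof_irrelevance. Qed.

Lemma graph_iso_quotient (X : Type) (P : X -> Prop)
    (adj : {x | P x} -> {x | P x} -> Prop) (H : graph)
    (R : gV H -> gV H -> Prop) (phi : gV H -> X) :
  (forall p, P (phi p)) ->
  (forall x, P x -> exists p, x = phi p) ->
  (forall p q, phi p = phi q <-> R p q) ->
  (forall S1 S2 p q, proj1_sig S1 = phi p -> proj1_sig S2 = phi q ->
     adj S1 S2 <-> ~ R p q /\ exists p' q', [/\ R p p', R q q' & gadj H p' q']) ->
  graph_iso (Graph {x | P x} adj) (quotient_graph R).
Proof.
move=> phiP phi_onto phi_fibre phi_adj.
have class_eq p q : R p = R q <-> R p q.
  split=> [-> | Rpq]; first by apply/phi_fibre.
  apply: functional_extensionality => r; apply: propositional_extensionality.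
  by rewrite -!phi_fibre; move/phi_fibre: Rpq => ->.
have rep (S : {x | P x}) : {p | proj1_sig S = phi p}.
  by apply: constructive_indefinite_description; apply: phi_onto; exact: proj2_sig.
have class_rep (Q : gV (quotient_graph R)) : {p | proj1_sig Q = R p}.
  by apply: constructive_indefinite_description; case: Q.
pose f S : gV (quotient_graph R) :=
  exist (fun Q => exists p, Q = R p) (R (sval (rep S))) (ex_intro _ _ erefl).
pose g Q : {x | P x} := exist P (phi (sval (class_rep Q))) (phiP _).
exists f; split.
  exists g => [S | Q]; apply: proj1_sig_inj => /=.
    case: (class_rep _) => q /= /esym/class_eq Rpq.
    by case: (rep S) Rpq => p /= -> /phi_fibre.
  case: (rep _) => p /= phi_p; case: (class_rep Q) phi_p => q /= -> phi_q.
  by apply/class_eq/phi_fibre.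
move=> S1 S2 /=; case: (rep S1) => p /= Sp; case: (rep S2) => q /= Sq.
rewrite (phi_adj _ _ _ _ Sp Sq) class_eq; split.
  by case=> nRpq [p' [q' [Rp Rq Hpq]]]; split=> //; exists p', q'.
by case=> nRpq [p' [q' [Rp [Rq Hpq]]]]; split=> //; exists p', q'.
Qed.

Lemma imset_eq_set1_inv (U V : finType) (f : U -> V) (A : {set U}) y :
  injective f -> f @: A = [set y] -> exists2 x, y = f x & A = [set x].
Proof.
move=> f_inj fA; have : y \in f @: A by rewrite fA set11.
case/imsetP => x _ eyx; exists x => //.
by apply: (imset_inj f_inj); rewrite fA imset_set1 eyx.
Qed.

Definition exchange (X : finType) (r : rel X) (A1 A2 : {set X}) : Prop :=
  exists x1 x2, [/\ A1 :\: A2 = [set x1], A2 :\: A1 = [set x2] & r x1 x2].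

Lemma exchangeC (X : finType) (r : rel X) (A1 A2 : {set X}) :
  symmetric r -> exchange r A1 A2 <-> exchange r A2 A1.
Proof.
by move=> r_sym; split=> -[x1 [x2 [d12 d21 rx]]]; exists x2, x1; rewrite r_sym.
Qed.

Lemma exchange_neq (X : finType) (r : rel X) (A1 A2 : {set X}) :
  exchange r A1 A2 -> A1 != A2.
Proof.
case=> x1 [x2 [d12 _ _]]; apply/eqP => eA.
by move: d12; rewrite eA setDv => /setP /(_ x1); rewrite !inE eqxx.
Qed.

Lemma exchange_predT (X : finType) (A1 A2 : {set X}) :
  (exists x1 x2, A1 :\: A2 = [set x1] /\ A2 :\: A1 = [set x2]) <->
  exchange (fun _ _ => true) A1 A2.
Proof. by split=> [[x1 [x2 []]] | [x1 [x2 []]]]; exists x1, x2. Qed.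

Lemma ident_rel_quotient_adj (T : finType) (P : {set T} -> Prop) v (r : rel T)
    (c : Prop) (adj : {B | P B} * bool -> {B | P B} * bool -> Prop) p q :
  (forall p q, adj p q <->
     (exchange r (sval p.1) (sval q.1) /\ p.2 = q.2) \/ [/\ p.1 = q.1, p.2 <> q.2 & c]) ->
  (exchange r (sval p.1) (sval q.1) /\ [\/ p.2 = q.2, v \in sval p.1 | v \in sval q.1])
    \/ [/\ sval p.1 = sval q.1, p.2 <> q.2, v \notin sval p.1 & c] <->
  ~ ident_rel v p q /\
    exists p' q', [/\ ident_rel v p p', ident_rel v q q' & adj p' q'].
Proof.
case: p q => [S1 b1] [S2 b2] adjE; rewrite /ident_rel /=; split.
  case=> [[xch copies] | [/proj1_sig_inj eS nb vS hc]]; last first.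
    subst S2; split; first by case=> _ [|]; [|apply/negP].
    exists (S1, b1), (S1, b2).
    by split; [split; auto | split; auto | apply/adjE; right].
  have nS : S1 <> S2 by move=> eS; move: (exchange_neq xch); rewrite eS eqxx.
  split=> [[]|] //.
  case: copies => [<- | vS1 | vS2].
  - exists (S1, b1), (S2, b1).
    by split; [split; auto | split; auto | apply/adjE; left].
  - exists (S1, b2), (S2, b2).
    by split; [split; auto | split; auto | apply/adjE; left].
  - exists (S1, b1), (S2, b1).
    by split; [split; auto | split; auto | apply/adjE; left].
case=> nR [[S1' b1'] [[S2' b2'] [[/= <- copy1] [/= <- copy2]]]].
move/adjE => /= [[xch eb] | [eS nb hc]].
  left; split=> //; subst b2'.
  by case: copy1 copy2 => [->|?] [->|?]; [apply: Or31 | apply: Or33 | apply: Or32 ..].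
subst S2; right.
by split=> //; [move=> e12 | apply/negP => vS]; apply: nR; split; auto.
Qed.

Lemma homo_connect (U V : finType) (r : rel U) (r' : rel V) (f : U -> V) :
  {homo f : x y / r x y >-> r' x y} ->
  forall a b, connect r a b -> connect r' (f a) (f b).
Proof.
move=> f_homo a _ /connectP [p r_p ->]; apply/connectP.
by exists (map f p); [exact: homo_path f_homo r_p | rewrite last_map].
Qed.

Lemma white_comp_isolated (U : finType) (r : rel U) (B : {set U}) w :
  w \notin B -> (forall y, r w y -> y \in B) -> white_comp r B w = [set w].
Proof.
move=> wB w_nbrs; apply/setP => y; rewrite !inE.
apply/idP/eqP => [/andP [_ /connectP [[|z p] /= p_w ->]] // | ->].
  by case/andP: p_w => /and3P [/w_nbrs zB _ /negP].
by rewrite wB connect0.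
Qed.

Lemma can_force_notin (U : finType) (r : rel U) s (B : {set U}) u w :
  can_force r s B u w -> w \notin B.
Proof.
case: s => /=; first by case/and3P.
by move/eqP/setP/(_ w); rewrite !inE eqxx => /andP [].
Qed.

Section ForcingImage.
Variables (U V : finType) (r : rel U) (r' : rel V) (f : U -> V) (g : V -> U).
Hypotheses (fK : cancel f g) (f_mono : forall x y, r' (f x) (f y) = r x y).

Let f_inj : injective f := can_inj fK.

Lemma set_in_codom (P : pred V) :
  (forall y, P y -> y \in codom f) -> [set y | P y] = f @: [set x | P (f x)].
Proof.
move=> P_codom; apply/setP => y; rewrite inE; apply/idP/imsetP => [Py | [x]].
  by have /codomP [x ey] := P_codom y Py; exists x; rewrite // inE -ey.
by rewrite inE => Pfx ->.
Qed.

Lemma imset_eq_set1 (A : {set U}) w : (f @: A == [set f w]) = (A == [set w]).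
Proof. by rewrite -imset_set1 (inj_eq (imset_inj f_inj)). Qed.

Lemma white_comp_image (B' : {set V}) w :
  (forall y, y \notin B' -> y \in codom f) ->
  white_comp r' B' (f w) = f @: white_comp r (f @^-1: B') w.
Proof.
move=> white_codom; rewrite /white_comp set_in_codom; last first.
  by move=> y /andP [/white_codom].
rewrite (_ : [set x | _ & _] = white_comp r (f @^-1: B') w) //.
apply/setP => x; rewrite !inE; congr (_ && _).
apply/idP/idP => [wx | wx]; last first.
  by apply: homo_connect wx => a b /=; rewrite !inE f_mono.
rewrite -[w]fK -[x]fK; apply: homo_connect wx => a b /and3P [rab aB bB].
have /codomP [a' ea] := white_codom a aB; have /codomP [b' eb] := white_codom b bB.
by subst a b; rewrite /= !fK !inE -f_mono rab aB bB.
Qed.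

Lemma can_force_image s (B' : {set V}) u w :
  (forall y, y \notin B' -> y \in codom f) ->
  can_force r' s B' (f u) (f w) = can_force r s (f @^-1: B') u w.
Proof.
move=> white_codom; case: s => /=.
  rewrite white_comp_image // !inE set_in_codom; last first.
    by move=> y /andP [/imsetP [x _ ->] _]; exact: codom_f.
  rewrite imset_eq_set1; congr [&& _, _ & _ == _]; apply/setP => x.
  by rewrite in_set (mem_imset _ _ f_inj) f_mono inE.
rewrite set_in_codom; last by move=> y /andP [_ /white_codom].
by rewrite imset_eq_set1; congr (_ == _); apply/setP => x; rewrite !inE f_mono.
Qed.

Lemma forcing_closes_image s (B : {set U}) (B' : {set V}) :
  (forall x, (f x \in B') = (x \in B)) ->
  (forall y, y \notin B' -> y \in codom f) ->
  forcing_closes r s B -> forcing_closes r' s B'.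
Proof.
move=> memB' white_codom fB; elim: fB B' memB' white_codom =>
  {B} [B -> | B u w f_uw _ IH] B' memB' white_codom.
  apply: fc_done; apply/setP => y; rewrite in_setT; apply/negPn/negP => yB'.
  by have /codomP [x ey] := white_codom y yB'; rewrite ey memB' in_setT in yB'.
have preB' : f @^-1: B' = B by apply/setP => x; rewrite inE memB'.
apply: (fc_step (u := f u) (w := f w)); first by rewrite can_force_image // preB'.
apply: IH => [x | y]; first by rewrite !inE memB' (inj_eq f_inj).
by rewrite inE negb_or => /andP [_ /white_codom].
Qed.

End ForcingImage.

Lemma twin_not_forced (U : finType) (r : rel U) s (B : {set U}) u x y :
  x \notin B -> y \notin B -> x != y ->
  (forall z, z != x -> z != y -> r z x = r z y) ->
  (if s is Plus then r x y else ~~ r x x && ~~ r y x) ->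
  ~~ can_force r s B u x.
Proof.
move=> xB yB nxy twins; case: s => [xy | /andP [nxx nyx]]; apply/negP.
  case/and3P => uB _ /eqP/setP force.
  have rux : r u x by have := force x; rewrite !inE eqxx => /andP [].
  have xy_white : connect [rel a b | [&& r a b, a \notin B & b \notin B]] x y.
    by apply: connect1; rewrite /= xy xB yB.
  have [ux uy] : u != x /\ u != y by split; apply: contraTneq uB => ->.
  by have := force y; rewrite !inE yB xy_white -twins // rux eq_sym (negbTE nxy).
move/eqP/setP => force.
have rux : r u x by have := force x; rewrite !inE eqxx xB andbT.
have [ux uy] : u != x /\ u != y by split; apply: contraTneq rux => ->.
by have := force y; rewrite !inE yB -twins // rux eq_sym (negbTE nxy).
Qed.

Section TwinExtension.
Variables (T : finType) (e : rel T) (v : T).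
Hypotheses (e_sym : symmetric e) (e_irr : irreflexive e).
Local Notation E s := (ext_graph e s v).
Implicit Types (B : {set T}) (S : {set option T}).

Definition twin_swap (o : option T) : option T :=
  match o with None => Some v | Some x => if x == v then None else Some x end.

Lemma twin_swapK : involutive twin_swap.
Proof.
case=> [x|] /=; last by rewrite eqxx.
by have [->|nxv] := eqVneq x v; rewrite /= ?eqxx // (negbTE nxv).
Qed.

Lemma ext_graph_sym s : symmetric (E s).
Proof. by case=> [a|] [b|] //=; rewrite e_sym. Qed.

Lemma ext_graph_swap s x y : E s (twin_swap x) (twin_swap y) = E s x y.
Proof.
case: s; case: x => [a|]; case: y => [b|] /=;
  do ?[case: (eqVneq a v) => [->|/negbTE na]]; do ?[case: (eqVneq b v) => [->|/negbTE nb]];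
  by rewrite /= ?eqxx ?na ?nb ?e_irr ?orbF ?orbT // e_sym.
Qed.

Lemma ext_graph_twins s o : o != None -> o != Some v -> E s o None = E s o (Some v).
Proof.
case: o => [a|] // _; rewrite (inj_eq (@Some_inj _)) => /negbTE nav.
by case: s; rewrite /= ?nav ?orbF e_sym.
Qed.

(* [to_copy b] moves v* to the vertex of G* labelled [b] in [P2]: v* itself for
   [true], v for [false]. *)
Definition to_copy (b : bool) : option T -> option T := if b then id else twin_swap.

Lemma to_copyK b : involutive (to_copy b).
Proof. by case: b => //; exact: twin_swapK. Qed.

Lemma ext_graph_to_copy s b x y : E s (to_copy b x) (to_copy b y) = E s x y.
Proof. by case: b => //; exact: ext_graph_swap. Qed.

Lemma mem_to_copy_imset b (A : {set option T}) o :
  (o \in to_copy b @: A) = (to_copy b o \in A).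
Proof. by rewrite (can2_imset_pre _ (to_copyK b) (to_copyK b)) inE. Qed.

Definition lift (B : {set T}) : {set option T} := None |: Some @: B.

Definition ext_set (B : {set T}) (b : bool) : {set option T} := to_copy b @: lift B.

Lemma mem_lift B o : (o \in lift B) = if o is Some x then x \in B else true.
Proof. by case: o => [x|]; rewrite !inE ?(mem_imset _ _ (@Some_inj _)). Qed.

Lemma lift_preimset (S : {set option T}) : None \in S -> lift (Some @^-1: S) = S.
Proof. by move=> NS; apply/setP => -[x|]; rewrite mem_lift ?inE. Qed.

Lemma mem_ext_set B b o : (o \in ext_set B b) = (to_copy b o \in lift B).
Proof. exact: mem_to_copy_imset. Qed.

Lemma mem_ext_setE B b o : (o \in ext_set B b) =
  if o is Some x then ~~ b && (x == v) || (x \in B) else b || (v \in B).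
Proof.
rewrite mem_ext_set; case: b o => [] [x|]; rewrite /= ?mem_lift //.
by case: eqP.
Qed.

Lemma card_ext_set B b : #|ext_set B b| = #|B|.+1.
Proof.
have NB : None \notin Some @: B by apply/imsetP => -[].
rewrite card_imset; last exact: can_inj (to_copyK b).
by rewrite cardsU1 NB card_imset //; exact: Some_inj.
Qed.

Lemma ext_set_inj B1 B2 b1 b2 :
  ext_set B1 b1 = ext_set B2 b2 <-> B1 = B2 /\ (b1 = b2 \/ v \in B1).
Proof.
split=> [/setP eq12 | [<- [<- // | vB1]]]; last first.
  by apply/setP => -[x|]; rewrite !mem_ext_setE ?vB1 ?orbT //; case: eqP => [->|];
    rewrite ?vB1 ?orbT ?andbF.
have eq_v := eq12 (Some v); have eq_new := eq12 None.
rewrite !mem_ext_setE eqxx !andbT in eq_v eq_new.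
have eqB : B1 = B2.
  apply/setP => x; have [->|nxv] := eqVneq x v.
    by move: eq_v eq_new; clear eq12; case: b1 b2 (v \in B1) (v \in B2) => [] [] [] [].
  by have := eq12 (Some x); rewrite !mem_ext_setE (negbTE nxv) !andbF.
split=> //; move: eq_v eq_new; rewrite eqB; clear eq12.
by case: b1 b2 (v \in B2) => [] [] [] //=; auto.
Qed.

Lemma forcing_closes_to_copy s b S :
  forcing_closes (E s) s S -> forcing_closes (E s) s (to_copy b @: S).
Proof.
apply: (forcing_closes_image (to_copyK b) (ext_graph_to_copy s b)) => [x | y _].
  by rewrite mem_to_copy_imset to_copyK.
by rewrite -[y](to_copyK b) codom_f.
Qed.

Lemma forcing_closes_lift s B : forcing_closes e s B -> forcing_closes (E s) s (lift B).
Proof.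
apply: (forcing_closes_image (f := Some) (g := odflt v) (r' := E s)) => // [x | [x|]];
  rewrite mem_lift // => _; exact: codom_f.
Qed.

Lemma forcing_closes_ext_set s B b :
  forcing_closes e s B -> forcing_closes (E s) s (ext_set B b).
Proof. by move/forcing_closes_lift; apply: forcing_closes_to_copy. Qed.

Lemma can_force_Some s S u w : None \in S ->
  can_force (E s) s S (Some u) (Some w) = can_force e s (Some @^-1: S) u w.
Proof.
move=> NS; apply: (can_force_image (g := odflt v)) => // -[x _ | ]; first exact: codom_f.
by rewrite NS.
Qed.

Lemma can_force_new_Minus S w :
  can_force (E Minus) Minus S None w = can_force (E Minus) Minus S (Some v) w.
Proof. by rewrite /=; congr (_ == _); apply/setP => -[x|]; rewrite !inE /= ?orbF ?e_irr. Qed.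

Lemma can_force_new_Plus S w : None \in S -> Some v \in S ->
  can_force (E Plus) Plus S None w = can_force (E Plus) Plus S (Some v) w.
Proof.
move=> NS VS; rewrite /= NS VS; congr [&& _, _ & _ == _]; apply/setP => -[x|].
  by rewrite !inE /=; have [->|_] := eqVneq x v; rewrite ?orbF // VS.
by rewrite !inE NS.
Qed.

(* While v is white, v+ can only force v, and only once every neighbour of v is blue;
   then any neighbour of v forces v in G. *)
Lemma can_force_new_Plus_white S w : (exists u, e v u) ->
  None \in S -> Some v \notin S -> can_force (E Plus) Plus S None (Some w) ->
  exists u, can_force e Plus (Some @^-1: S) u w.
Proof.
move=> [u0 vu0] NS VS /and3P [_ wS /eqP force].
set C := white_comp (E Plus) S (Some w) in force.
have forceP y : (y \in C) && E Plus None y = (y == Some w).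
  by rewrite -in_set1 -force inE.
have white_adj y : Some y \notin S -> e w y -> Some y \in C.
  by move=> yS wy; rewrite inE yS; apply: connect1; rewrite /= wy wS.
have w_v : w = v.
  apply/eqP/negPn/negP => nwv.
  have vw : e v w.
    by have := forceP (Some w); rewrite inE wS connect0 /= (negbTE nwv) orbF eqxx.
  have := forceP (Some v); rewrite white_adj ?(e_sym w) //= eqxx orbT.
  by move/esym/eqP => [vw']; rewrite vw' eqxx in nwv.
subst w; have nbrs_blue y : e v y -> y \in Some @^-1: S.
  move=> vy; rewrite inE; apply/negPn/negP => yS.
  have := forceP (Some y); rewrite white_adj //= vy => /esym/eqP [yv].
  by rewrite yv e_irr in vy.
exists u0; rewrite /= nbrs_blue //= inE VS white_comp_isolated ?inE //.
by apply/eqP/setP => y; rewrite !inE; case: eqP => // ->; rewrite e_sym.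
Qed.

Lemma can_force_pull s S u w : (s = Plus -> exists u, e v u) ->
  None \in S -> can_force (E s) s S u (Some w) ->
  exists u', can_force e s (Some @^-1: S) u' w.
Proof.
move=> v_nbr NS; case: u => [u | f_new]; first by exists u; rewrite -can_force_Some.
case: s v_nbr f_new => v_nbr f_new.
  have [VS | VS] := boolP (Some v \in S).
    by exists v; rewrite -can_force_Some // -can_force_new_Plus.
  exact: can_force_new_Plus_white (v_nbr erefl) NS VS f_new.
by exists v; rewrite -can_force_Some // -can_force_new_Minus.
Qed.

Lemma forcing_closes_pull s S : (s = Plus -> exists u, e v u) ->
  forcing_closes (E s) s S -> None \in S -> forcing_closes e s (Some @^-1: S).
Proof.
move=> v_nbr; elim=> {S} [S -> | S u w f_uw _ IH] NS.
  by apply: fc_done; apply/setP => x; rewrite !inE.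
case: w f_uw IH => [w | /can_force_notin]; last by rewrite NS.
move=> f_uw IH; have [u' f_u'w] := can_force_pull v_nbr NS f_uw.
apply: fc_step f_u'w _.
have -> : w |: Some @^-1: S = Some @^-1: (Some w |: S) by apply/setP => x; rewrite !inE.
by apply: IH; rewrite !inE NS orbT.
Qed.

Lemma forcing_closes_twin s S :
  forcing_closes (E s) s S -> (None \in S) || (Some v \in S).
Proof.
elim=> {S} [S -> | S u w f_uw _ IH]; first by rewrite !inE.
apply/negPn/negP; rewrite negb_or => /andP [NS VS]; move: IH f_uw.
rewrite !in_setU1 (negbTE NS) (negbTE VS) !orbF => /orP [] /eqP <-; apply/negP.
  apply: (@twin_not_forced _ _ _ _ u _ (Some v)) => //; first exact: ext_graph_twins.
  by case: s; rewrite /= e_irr ?eqxx.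
apply: (@twin_not_forced _ _ _ _ u _ None) => //; first by move=> z *; rewrite ext_graph_twins.
by case: s; rewrite /= e_irr ?eqxx.
Qed.

Lemma forcing_closes_ext_inv s S : (s = Plus -> exists u, e v u) ->
  forcing_closes (E s) s S -> exists B b, forcing_closes e s B /\ S = ext_set B b.
Proof.
move=> v_nbr fS; have [NS | NS] := boolP (None \in S).
  exists (Some @^-1: S), true; split; first exact: forcing_closes_pull.
  by rewrite /ext_set imset_id lift_preimset.
have VS : Some v \in S by move: (forcing_closes_twin fS); rewrite (negbTE NS).
have NS' : None \in twin_swap @: S by rewrite (mem_to_copy_imset false).
exists (Some @^-1: (twin_swap @: S)), false; split.
  exact: forcing_closes_pull v_nbr (forcing_closes_to_copy false fS) NS'.
apply/setP => o; rewrite /ext_set lift_preimset //.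
by rewrite !(mem_to_copy_imset false) (to_copyK false).
Qed.

Lemma min_forcing_set_ext s S : (s = Plus -> exists u, e v u) ->
  min_forcing_set (E s) s S <-> exists B b, min_forcing_set e s B /\ S = ext_set B b.
Proof.
move=> v_nbr; split=> [[fS S_min] | [B [b [[fB B_min] ->]]]].
  have [B [b [fB eS]]] := forcing_closes_ext_inv v_nbr fS; subst S.
  exists B, b; split=> //; split=> // B' fB'.
  by have := S_min _ (forcing_closes_ext_set b fB'); rewrite !card_ext_set ltnS.
split=> [|S' fS']; first exact: forcing_closes_ext_set.
have [B' [b' [fB' ->]]] := forcing_closes_ext_inv v_nbr fS'.
by rewrite !card_ext_set ltnS; exact: B_min.
Qed.

Lemma setD_ext_set B1 B2 b :
  ext_set B1 b :\: ext_set B2 b = [set to_copy b (Some x) | x in B1 :\: B2].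
Proof.
apply/setP => o; rewrite in_setD !mem_ext_set imset_comp mem_to_copy_imset.
case: (to_copy b o) => [x|]; rewrite !mem_lift.
  by rewrite (mem_imset _ _ (@Some_inj _)) inE andbC.
by apply/esym/imsetP => -[].
Qed.

Section Exchange.
(* The condition a token move must satisfy in G* and in G: none for token exchange,
   adjacency for token sliding. *)
Variables (Ed : rel (option T)) (EdG : rel T).
Hypotheses (Ed_copy : forall b x y, Ed (to_copy b (Some x)) (to_copy b (Some y)) = EdG x y)
  (Ed_sym : symmetric Ed).

Lemma exchange_ext_set_same B1 B2 b :
  exchange Ed (ext_set B1 b) (ext_set B2 b) <-> exchange EdG B1 B2.
Proof.
have copy_inj : injective (fun x => to_copy b (Some x)).
  exact: inj_comp (can_inj (to_copyK b)) (@Some_inj _).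
rewrite /exchange !setD_ext_set; split=> [[o1 [o2 [d12 d21 Eo]]] | [x1 [x2 [d12 d21 Ex]]]].
  have [x1 eo1 {}d12] := imset_eq_set1_inv copy_inj d12.
  have [x2 eo2 {}d21] := imset_eq_set1_inv copy_inj d21.
  by exists x1, x2; rewrite -(Ed_copy b) -eo1 -eo2.
by exists (to_copy b (Some x1)), (to_copy b (Some x2)); rewrite d12 d21 !imset_set1 Ed_copy.
Qed.

Lemma exchange_ext_set_cross B1 B2 : v \notin B1 -> v \notin B2 ->
  exchange Ed (ext_set B1 true) (ext_set B2 false) <-> B1 = B2 /\ Ed None (Some v).
Proof.
move=> vB1 vB2; split=> [[o1 [o2 [/setP d12 /setP d21 Eo]]] | [<- Ev]].
  have := d12 None; have := d21 (Some v).
  rewrite !in_setD !mem_ext_setE !in_set1 /= eqxx (negbTE vB1) (negbTE vB2) /=.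
  move=> /esym/eqP eo2 /esym/eqP eo1; subst o1 o2; split=> //.
  apply/setP => x; have [->|nxv] := eqVneq x v; first by rewrite (negbTE vB1) (negbTE vB2).
  have := d12 (Some x); have := d21 (Some x).
  rewrite !in_setD !mem_ext_setE !in_set1 /= (negbTE nxv) (inj_eq (@Some_inj _)) (negbTE nxv).
  by case: (x \in B1) (x \in B2) => [] [].
exists None, (Some v); split=> //; apply/setP => -[x|];
  rewrite !in_setD !mem_ext_setE !in_set1 /= ?(negbTE vB1) //.
  by rewrite -[Some x == None]/false; case: (x \in B1); rewrite ?orbT ?andbF.
rewrite (inj_eq (@Some_inj _)).
by have [->|nxv] := eqVneq x v; rewrite ?(negbTE vB1) ?andNb.
Qed.

Lemma exchange_ext_set B1 B2 b1 b2 :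
  exchange Ed (ext_set B1 b1) (ext_set B2 b2) <->
  (exchange EdG B1 B2 /\ [\/ b1 = b2, v \in B1 | v \in B2])
  \/ [/\ B1 = B2, b1 <> b2, v \notin B1 & Ed None (Some v)].
Proof.
have [vB1 | nvB1] := boolP (v \in B1).
  have -> : ext_set B1 b1 = ext_set B1 b2 by apply/ext_set_inj; auto.
  rewrite exchange_ext_set_same.
  by split=> [xch | [[] // | [? ? ? ?] //]]; left; split=> //; apply: Or32.
have [vB2 | nvB2] := boolP (v \in B2).
  have -> : ext_set B2 b2 = ext_set B2 b1 by apply/ext_set_inj; auto.
  rewrite exchange_ext_set_same.
  split=> [xch | [[] // | [eB *]]]; first by left; split=> //; apply: Or33.
  by rewrite eB vB2 in nvB1.
have [<- | nb] := eqVneq b1 b2.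
  rewrite exchange_ext_set_same.
  by split=> [xch | [[] // | []]]; first by left; split=> //; apply: Or31.
case: b1 b2 nb => [] [] // _; [|rewrite exchangeC //]; rewrite exchange_ext_set_cross //;
  by split=> [[-> Ev] | [[_ []] // | [-> _ _ Ev]]]; [right | ].
Qed.

Lemma ext_reconfiguration_iso s (v_nbr : s = Plus -> exists u, e v u)
    (adj : {S | min_forcing_set (E s) s S} -> {S | min_forcing_set (E s) s S} -> Prop)
    (adjH : {B | min_forcing_set e s B} * bool -> {B | min_forcing_set e s B} * bool -> Prop) :
  (forall x y, adj x y <-> exchange Ed (sval x) (sval y)) ->
  (forall p q, adjH p q <-> (exchange EdG (sval p.1) (sval q.1) /\ p.2 = q.2)
                            \/ [/\ p.1 = q.1, p.2 <> q.2 & Ed None (Some v)]) ->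
  graph_iso (Graph _ adj)
    (quotient_graph (G := Graph _ adjH) (ident_rel (P := min_forcing_set e s) v)).
Proof.
move=> adjE adjHE.
apply: (graph_iso_quotient (phi := fun p : gV (Graph _ adjH) => ext_set (sval p.1) p.2)).
- move=> [[B mB] b]; apply/(min_forcing_set_ext _ v_nbr); by exists B, b.
- by move=> S /(min_forcing_set_ext _ v_nbr) [B [b [mB ->]]]; exists (exist _ B mB, b).
- move=> [S1 b1] [S2 b2]; rewrite ext_set_inj /ident_rel /=.
  by split=> -[eS copies]; split=> //; [apply: proj1_sig_inj | rewrite eS].
- move=> x y p q ex ey.
  by rewrite adjE ex ey exchange_ext_set -(ident_rel_quotient_adj v p q adjHE).
Qed.

End Exchange.

End TwinExtension.

Theorem theorem6p14 (T : finType) (e : rel T)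
  (e_sym : symmetric e) (e_irr : irreflexive e) (v : T) :
  (forall s : sign, (s = Plus -> exists u, e v u) ->
     graph_iso (ZTE s (ext_graph e s v))
       (quotient_graph (G := cart (ZTE s e) P2)
          (ident_rel (P := min_forcing_set e s) v)))
  /\ ((exists u, e v u) ->
     graph_iso (ZTS Plus (ext_graph e Plus v))
       (quotient_graph (G := cart (ZTS Plus e) P2)
          (ident_rel (P := min_forcing_set e Plus) v)))
  /\ graph_iso (ZTS Minus (ext_graph e Minus v))
       (quotient_graph (G := two_copies (ZTS Minus e))
          (ident_rel (P := min_forcing_set e Minus) v)).
Proof.
have copy_adj s b (x y : T) := ext_graph_to_copy v e_sym e_irr s b (Some x) (Some y).
have sym_adj s := ext_graph_sym v e_sym s.
split; [|split].
- move=> s v_nbr; apply: (ext_reconfiguration_iso e_sym e_irr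
    (Ed := fun _ _ => true) (EdG := fun _ _ => true) _ _ v_nbr) => // [x y | p q].
    exact: exchange_predT.
  by split=> [[[/exchange_predT ? ?] | [? ?]] | [[/exchange_predT ? ?] | [? ? _]]];
    [left | right | left | right].
- move=> v_nbr; apply: (ext_reconfiguration_iso e_sym e_irr
    (copy_adj Plus) (sym_adj Plus) (fun _ => v_nbr)) => // p q.
  by rewrite /= eqxx orbT; split=> [[? | [? ?]] | [? | [? ? _]]]; [left | right | left | right].
- apply: (ext_reconfiguration_iso e_sym e_irr (copy_adj Minus) (sym_adj Minus)
    (s := Minus)) => // p q.
  by rewrite /= e_irr; split=> [[? ?] | [[? ?] | []]]; [left | | ].
Qed.
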